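(* In the setting described in the context, let $X,Y,W$ be graphs in $\Gamma$, let $\varphi:X\to Y$ be a monomorphism, and let $h:GW\to GY$ be a morphism of $R\mathcal{C}$. If $(\mathrm{id}_W)h\in (GX)G\varphi$, then there exists a morphism $\tilde h:GW\to GX$ with $\tilde h\,(G\varphi)=h$.
   Context: $R$ is a commutative ring with $1\ne0$; $\kappa$ a cardinal of uncountable cofinality. Graphs: sets with a binary relation; morphisms: relation-preserving maps; maps act on the right ($\sigma\tau$ = first $\sigma$ then $\tau$). $R\mathcal{C}$ is a category such that: it is an $R$-category (Hom-sets are $R$-modules, composition bilinear); preabelian; has arbitrary direct sums; is concrete with underlying-set functor preserving directed colimits and monomorphisms injective on underlying sets. $\Gamma$ is a full subcategory of graphs with one representative per isomorphism class of graphs of cardinality $<\kappa$. $A$ is the free $R$-module on the morphisms of $\Gamma$ plus $1$, an $R$-algebra via composition (product $0$ if not composable), $R$ central. $M\in R\mathcal{C}$ satisfies: (B1) $A\cong\mathrm{Hom}_R(M,M)$ (so $M$ is a right $A$-object); (B2) $A\subseteq M$ as $A$-objects and $A\varphi=A\cap M\varphi$ for every morphism $\varphi$ of $\Gamma$; (B3) for a monomorphism $\varphi:C\to D$ in $\Gamma$, $M\,\mathrm{id}_C\subseteq M\xrightarrow{\varphi}M$ is a monomorphism. For $X\in\Gamma$, $GX=M\,\mathrm{id}_X$ (and $\mathrm{id}_X\in GX$), and for $\varphi:X\to Y$ in $\Gamma$, $G\varphi:GX\to GY$ is right multiplication by $\varphi$. *)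

From HB Require Import structures.
From Stdlib Require Lists.List.
From mathcomp Require Import all_boot all_algebra.
Set Implicit Arguments.
Unset Strict Implicit.
Unset Printing Implicit Defensive.
Import GRing.Theory.
Local Open Scope ring_scope.

(* Concrete R-categories.  Maps act on the right: [cmp f g] = first f, then g. *)

Record RCat (R : comNzRingType) := {
  obj : Type;
  Hm : obj -> obj -> lmodType R;
  cmp : forall a b c : obj, Hm a b -> Hm b c -> Hm a c;
  idm : forall a : obj, Hm a a;
  Ucar : obj -> Type;
  Umap : forall a b : obj, Hm a b -> Ucar a -> Ucar b
}.
Arguments obj {R}.
Arguments Hm {R} _ _ _.
Arguments cmp {R _ a b c}.
Arguments idm {R _}.
Arguments Ucar {R _}.
Arguments Umap {R _ a b}.

Section RCatDefs.
Variables (R : comNzRingType) (C : RCat R).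

Definition is_Rcategory : Prop :=
  (forall a b c d (f : Hm C a b) (g : Hm C b c) (h : Hm C c d),
      cmp f (cmp g h) = cmp (cmp f g) h) /\
  (forall a b (f : Hm C a b), cmp (idm a) f = f /\ cmp f (idm b) = f) /\
  (forall a b c (f f' : Hm C a b) (g : Hm C b c),
      cmp (f + f') g = cmp f g + cmp f' g) /\
  (forall a b c (f : Hm C a b) (g g' : Hm C b c),
      cmp f (g + g') = cmp f g + cmp f g') /\
  (forall a b c (r : R) (f : Hm C a b) (g : Hm C b c),
      cmp (r *: f) g = r *: cmp f g /\ cmp f (r *: g) = r *: cmp f g).

Definition mono {a b : obj C} (f : Hm C a b) : Prop :=
  forall z (g1 g2 : Hm C z a), cmp g1 f = cmp g2 f -> g1 = g2.

Definition is_kernel {a b z : obj C} (f : Hm C a b) (k : Hm C z a) : Prop :=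
  cmp k f = 0 /\
  forall z' (g : Hm C z' a), cmp g f = 0 -> exists! u : Hm C z' z, cmp u k = g.

Definition is_cokernel {a b z : obj C} (f : Hm C a b) (c : Hm C b z) : Prop :=
  cmp f c = 0 /\
  forall z' (g : Hm C b z'), cmp f g = 0 -> exists! u : Hm C z z', cmp c u = g.

Definition is_image {a b z : obj C} (f : Hm C a b) (k : Hm C z b) : Prop :=
  exists (q : obj C) (c : Hm C b q), is_cokernel f c /\ is_kernel c k.

Definition has_zero_object : Prop :=
  exists z : obj C, forall a,
    (forall f g : Hm C z a, f = g) /\ (forall f g : Hm C a z, f = g).

Definition has_biproducts : Prop :=
  forall a b : obj C, exists (c : obj C) (i1 : Hm C a c) (i2 : Hm C b c)
    (p1 : Hm C c a) (p2 : Hm C c b),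
    [/\ cmp i1 p1 = idm a, cmp i2 p2 = idm b, cmp i1 p2 = 0,
        cmp i2 p1 = 0 & cmp p1 i1 + cmp p2 i2 = idm c].

Definition has_kernels : Prop :=
  forall a b (f : Hm C a b), exists z (k : Hm C z a), is_kernel f k.

Definition has_cokernels : Prop :=
  forall a b (f : Hm C a b), exists z (c : Hm C b z), is_cokernel f c.

Definition preabelian : Prop :=
  has_zero_object /\ has_biproducts /\ has_kernels /\ has_cokernels.

Definition has_direct_sums : Prop :=
  forall (I : Type) (F : I -> obj C), exists (S : obj C) (inj : forall i, Hm C (F i) S),
    forall (T : obj C) (g : forall i, Hm C (F i) T),
      exists! u : Hm C S T, forall i, cmp (inj i) u = g i.

Definition directed_preorder (I : Type) (le : I -> I -> Prop) : Prop :=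
  [/\ inhabited I, forall i, le i i, forall i j k, le i j -> le j k -> le i k
    & forall i j, exists k, le i k /\ le j k].

Definition is_diagram (I : Type) (le : I -> I -> Prop) (D : I -> obj C)
  (d : forall i j, le i j -> Hm C (D i) (D j)) : Prop :=
  (forall i (p : le i i), d i i p = idm (D i)) /\
  (forall i j k (p : le i j) (q : le j k) (r : le i k), cmp (d i j p) (d j k q) = d i k r).

Definition is_cocone (I : Type) (le : I -> I -> Prop) (D : I -> obj C)
  (d : forall i j, le i j -> Hm C (D i) (D j)) (L : obj C)
  (lam : forall i, Hm C (D i) L) : Prop :=
  forall i j (p : le i j), cmp (d i j p) (lam j) = lam i.

Definition is_colimit (I : Type) (le : I -> I -> Prop) (D : I -> obj C)
  (d : forall i j, le i j -> Hm C (D i) (D j)) (L : obj C)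
  (lam : forall i, Hm C (D i) L) : Prop :=
  is_cocone d lam /\
  forall (T : obj C) (mu : forall i, Hm C (D i) T), is_cocone d mu ->
    exists! u : Hm C L T, forall i, cmp (lam i) u = mu i.

(* concreteness: the underlying-set functor is a faithful functor that
   preserves directed colimits (colimits in sets described explicitly),
   and monomorphisms are injective on underlying sets *)
Definition is_concrete : Prop :=
  (forall a b c (f : Hm C a b) (g : Hm C b c) x, Umap (cmp f g) x = Umap g (Umap f x)) /\
  (forall (a : obj C) (x : Ucar a), Umap (idm a) x = x) /\
  (forall a b (f g : Hm C a b), (forall x, Umap f x = Umap g x) -> f = g) /\
  (forall a b (f : Hm C a b), mono f -> injective (Umap f)) /\
  (forall (I : Type) (le : I -> I -> Prop) (D : I -> obj C)
     (d : forall i j, le i j -> Hm C (D i) (D j)) (L : obj C)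
     (lam : forall i, Hm C (D i) L),
     directed_preorder le -> is_diagram d -> is_colimit d lam ->
     (forall x : Ucar L, exists i (y : Ucar (D i)), Umap (lam i) y = x) /\
     (forall i j (x : Ucar (D i)) (y : Ucar (D j)), Umap (lam i) x = Umap (lam j) y ->
        exists k (p : le i k) (q : le j k), Umap (d i k p) x = Umap (d j k q) y)).

Definition is_RC : Prop :=
  [/\ is_Rcategory, preabelian, has_direct_sums & is_concrete].

End RCatDefs.

Record graph := Graph { gcar : Type; gedge : gcar -> gcar -> Prop }.

Definition ghom (G H : graph) (f : gcar G -> gcar H) : Prop :=
  forall x y, gedge x y -> gedge (f x) (f y).

Lemma ghom_id (G : graph) : ghom (fun x : gcar G => x).
Proof. by []. Qed.

Lemma ghom_comp (G H L : graph) (f : gcar G -> gcar H) (g : gcar H -> gcar L) :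
  ghom f -> ghom g -> ghom (fun x => g (f x)).
Proof. by move=> hf hg x y /hf /hg. Qed.

Definition giso (G H : graph) : Prop :=
  exists (f : gcar G -> gcar H) (g : gcar H -> gcar G),
    [/\ cancel f g, cancel g f & forall x y, gedge x y <-> gedge (f x) (f y)].

Definition card_lt (T K : Type) : Prop :=
  (exists f : T -> K, injective f) /\ ~ (exists g : K -> T, injective g).

Definition uncountable_cofinality (K : Type) : Prop :=
  ~ (exists f : K -> nat, injective f) /\
  forall F : nat -> Type, (forall n, card_lt (F n) K) -> card_lt {n : nat & F n} K.

Record GammaCat := { gobj : Type; ggr : gobj -> graph }.

Definition is_Gamma (K : Type) (Ga : GammaCat) : Prop :=
  [/\ forall X : gobj Ga, card_lt (gcar (ggr X)) K,
      forall G : graph, card_lt (gcar G) K -> exists X : gobj Ga, giso G (ggr X)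
    & forall X Y : gobj Ga, giso (ggr X) (ggr Y) -> X = Y].

Definition gmor (Ga : GammaCat) : Type :=
  {X : gobj Ga & {Y : gobj Ga &
     {f : gcar (ggr X) -> gcar (ggr Y) | ghom (G:=ggr X) (H:=ggr Y) f}}}.

Definition mkmor (Ga : GammaCat) (X Y : gobj Ga) (f : gcar (ggr X) -> gcar (ggr Y))
  (hf : ghom (G:=ggr X) (H:=ggr Y) f) : gmor Ga :=
  existT _ X (existT _ Y (exist _ f hf)).

Definition msrc (Ga : GammaCat) (p : gmor Ga) : gobj Ga := projT1 p.
Definition mtgt (Ga : GammaCat) (p : gmor Ga) : gobj Ga := projT1 (projT2 p).

Definition gid (Ga : GammaCat) (X : gobj Ga) : gmor Ga :=
  mkmor (@ghom_id (ggr X)).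

Definition gcomp (Ga : GammaCat) (X Y Z : gobj Ga)
  (f : gcar (ggr X) -> gcar (ggr Y)) (g : gcar (ggr Y) -> gcar (ggr Z))
  (hf : ghom (G:=ggr X) (H:=ggr Y) f) (hg : ghom (G:=ggr Y) (H:=ggr Z) g) : gmor Ga :=
  mkmor (ghom_comp hf hg).

Definition gmono (Ga : GammaCat) (X Y : gobj Ga) (f : gcar (ggr X) -> gcar (ggr Y)) : Prop :=
  forall (Z : gobj Ga) (g1 g2 : gcar (ggr Z) -> gcar (ggr X)),
    ghom (G:=ggr Z) (H:=ggr X) g1 -> ghom (G:=ggr Z) (H:=ggr X) g2 ->
    (forall z, f (g1 z) = f (g2 z)) -> forall z, g1 z = g2 z.

(* A is the free R-module on [option (gmor Ga)] ([None] standing for 1).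
   [Phi : option (gmor Ga) -> Hm C M M] is the image of this basis under the
   isomorphism A ~= Hom(M,M) of (B1); the right A-action on M is through it. *)

Section Bconds.
Variables (R : comNzRingType) (C : RCat R) (Ga : GammaCat) (M : obj C).
Variable Phi : option (gmor Ga) -> Hm C M M.

(* the element  sum_{x in s} c x * x  of A, sent into Hom(M,M) *)
Definition Phi_lin (s : seq (option (gmor Ga))) (c : option (gmor Ga) -> R) : Hm C M M :=
  \sum_(x <- s) c x *: Phi x.

(* (B1): A ~= Hom_R(M,M) as R-algebras (via composition, maps on the right) *)
Definition B1 : Prop :=
  [/\ Phi None = idm M,
      (forall (X Y Z : gobj Ga) (f : gcar (ggr X) -> gcar (ggr Y))
         (g : gcar (ggr Y) -> gcar (ggr Z)) (hf : ghom (G:=ggr X) (H:=ggr Y) f)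
         (hg : ghom (G:=ggr Y) (H:=ggr Z) g),
         cmp (Phi (Some (mkmor hf))) (Phi (Some (mkmor hg))) = Phi (Some (gcomp hf hg))),
      (forall p q : gmor Ga, mtgt p <> msrc q -> cmp (Phi (Some p)) (Phi (Some q)) = 0),
      (forall e : Hm C M M, exists s c, e = Phi_lin s c)
    &
      (forall s c, Stdlib.Lists.List.NoDup s -> Phi_lin s c = 0 -> forall x, Stdlib.Lists.List.In x s -> c x = 0)].

(* the embedding A -> M of (B2), a |-> m0 . a, where m0 is the image of 1 *)
Definition iotaA (m0 : Ucar M) (e : Hm C M M) : Ucar M := Umap e m0.

(* (B2): A ⊆ M as A-objects, and  A phi = A ∩ M phi  for every phi in Gamma *)
Definition B2 (m0 : Ucar M) : Prop :=
  injective (iotaA m0) /\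
  forall p : gmor Ga, forall x : Ucar M,
    (exists e, x = iotaA m0 (cmp e (Phi (Some p)))) <->
    ((exists e, x = iotaA m0 e) /\ (exists m, x = Umap (Phi (Some p)) m)).

(* (B3): for a monomorphism phi : C' -> D in Gamma,
   M id_C' ⊆ M --phi--> M is a monomorphism *)
Definition B3 : Prop :=
  forall (X Y : gobj Ga) (f : gcar (ggr X) -> gcar (ggr Y))
    (hf : ghom (G:=ggr X) (H:=ggr Y) f), gmono f ->
    forall (G : obj C) (k : Hm C G M), is_image (Phi (Some (gid X))) k ->
      mono (cmp k (Phi (Some (mkmor hf)))).

End Bconds.

(* Since id_W is idempotent, GW is a retract of M, so h followed by GY ⊆ M
   is induced by an endomorphism e of M; e lies in A and (id_W)h = m0 e lies
   in M phi, so (B2) gives e = a phi with a in A.  Then id_W a id_X, read as a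
   map GW -> GX, lifts h because GY ⊆ M is a monomorphism. *)
From HB Require Import structures.
From mathcomp Require Import all_boot all_algebra.
From Stdlib Require Import ProofIrrelevance.
Import GRing.Theory.
Local Open Scope ring_scope.

Section RCategory.
Context {R : comNzRingType} {C : RCat R} (hR : is_Rcategory C).

Lemma cmpA {a b c d} (f : Hm C a b) (g : Hm C b c) (h : Hm C c d) :
  cmp f (cmp g h) = cmp (cmp f g) h.
Proof. by case: hR => H _; apply: H. Qed.

Lemma cmp1l {a b} (f : Hm C a b) : cmp (idm a) f = f.
Proof. by case: hR => _ [H _]; case: (H _ _ f). Qed.

Lemma cmp1r {a b} (f : Hm C a b) : cmp f (idm b) = f.
Proof. by case: hR => _ [H _]; case: (H _ _ f). Qed.

Lemma cmpBr {a b c} (f : Hm C a b) (g g' : Hm C b c) :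
  cmp f (g - g') = cmp f g - cmp f g'.
Proof.
case: hR => _ [_ [_ [cmpDr _]]].
by have := cmpDr _ _ _ f (g - g') g'; rewrite subrK => ->; rewrite addrK.
Qed.

Lemma cmpBl {a b c} (f f' : Hm C a b) (g : Hm C b c) :
  cmp (f - f') g = cmp f g - cmp f' g.
Proof.
case: hR => _ [_ [cmpDl _]].
by have := cmpDl _ _ _ (f - f') f' g; rewrite subrK => ->; rewrite addrK.
Qed.

Lemma cmp0r {a b c} (f : Hm C a b) : cmp f (0 : Hm C b c) = 0.
Proof. by rewrite -(subrr 0) cmpBr subrr. Qed.

Lemma cmp0l {a b c} (g : Hm C b c) : cmp (0 : Hm C a b) g = 0.
Proof. by rewrite -(subrr 0) cmpBl subrr. Qed.

Lemma kernel_mono {a b z} {f : Hm C a b} {k : Hm C z a} : is_kernel f k -> mono k.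
Proof.
move=> [kf0 kf_univ] y g1 g2 E.
have gkf0 : cmp (cmp g1 k) f = 0 by rewrite -cmpA kf0 cmp0r.
have [v [_ v_uniq]] := kf_univ _ _ gkf0.
by rewrite -(v_uniq g1 erefl) -(v_uniq g2 (esym E)).
Qed.

Lemma image_mono {a b z} {f : Hm C a b} {k : Hm C z b} : is_image f k -> mono k.
Proof. by move=> [q [c [_ /kernel_mono]]]. Qed.

Lemma image_idem_split {a z} {P : Hm C a a} {k : Hm C z a} :
  cmp P P = P -> is_image P k ->
  exists u : Hm C a z, cmp k u = idm z /\ cmp u k = P.
Proof.
move=> PP kP; have monok := image_mono kP.
case: kP => q [c [[Pc0 Pc_univ] [kc0 kc_univ]]].
have [u [uk _]] := kc_univ _ _ Pc0.
exists u; split=> //.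
have P_compl : cmp P (idm a - P) = 0 by rewrite cmpBr cmp1r PP subrr.
have [v [cv _]] := Pc_univ _ _ P_compl.
have kP : cmp k P = k.
  have : cmp k (idm a - P) = 0 by rewrite -cv cmpA kc0 cmp0l.
  by rewrite cmpBr cmp1r => /eqP; rewrite subr_eq0 => /eqP <-.
by apply: monok; rewrite -cmpA uk kP cmp1l.
Qed.

Lemma Umap_split (Ucmp : forall a b c (f : Hm C a b) (g : Hm C b c) x,
                     Umap (cmp f g) x = Umap g (Umap f x))
  {a z b} {k : Hm C z a} {u : Hm C a z} (g : Hm C z b) {y : Ucar z} {m : Ucar a} :
  cmp k u = idm z -> Umap k y = Umap (cmp u k) m ->
  Umap (cmp u g) m = Umap g y.
Proof.
move=> ku hy.
have uku : cmp (cmp u k) (cmp u g) = cmp u g by rewrite -cmpA (cmpA k) ku cmp1l.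
by rewrite -uku Ucmp -hy -Ucmp cmpA ku cmp1l.
Qed.

End RCategory.

Section BConditions.
Context {R : comNzRingType} {C : RCat R} {Ga : GammaCat} {M : obj C}.
Context {Phi : option (gmor Ga) -> Hm C M M}.

Lemma Phi_gidl (hB1 : B1 Phi) (X Y : gobj Ga) (f : gcar (ggr X) -> gcar (ggr Y))
  (hf : ghom (G:=ggr X) (H:=ggr Y) f) :
  cmp (Phi (Some (gid X))) (Phi (Some (mkmor hf))) = Phi (Some (mkmor hf)).
Proof.
case: hB1 => _ Phi_cmp _ _ _.
by rewrite Phi_cmp /gcomp (proof_irrelevance _ (ghom_comp _ _) hf).
Qed.

Lemma Phi_gid_idem (hB1 : B1 Phi) (X : gobj Ga) :
  cmp (Phi (Some (gid X))) (Phi (Some (gid X))) = Phi (Some (gid X)).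
Proof. exact: Phi_gidl. Qed.

(* (B2) read on endomorphisms: an element of A lying in M phi lies in A phi. *)
Lemma B2_factor {m0 : Ucar M} (hB2 : B2 Phi m0) (p : gmor Ga) (e : Hm C M M)
  (m : Ucar M) :
  Umap e m0 = Umap (Phi (Some p)) m -> exists a, cmp a (Phi (Some p)) = e.
Proof.
case: hB2 => iota_inj B2p em.
have [|a ha] := (B2p p (Umap e m0)).2; first by split; [exists e | exists m].
by exists a; apply: iota_inj; rewrite -ha.
Qed.

End BConditions.

Theorem lemma3p10 (R : comNzRingType) (K : Type) (hK : uncountable_cofinality K)
  (C : RCat R) (hC : is_RC C)
  (Ga : GammaCat) (hGa : is_Gamma K Ga)
  (M : obj C) (Phi : option (gmor Ga) -> Hm C M M) (hB1 : B1 Phi)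
  (m0 : Ucar M) (hB2 : B2 Phi m0) (hB3 : B3 Phi)
  (X Y W : gobj Ga) (f : gcar (ggr X) -> gcar (ggr Y))
  (hf : ghom (G:=ggr X) (H:=ggr Y) f) (hmono : gmono f)
  (GX GY GW : obj C) (kX : Hm C GX M) (kY : Hm C GY M) (kW : Hm C GW M)
  (hkX : is_image (Phi (Some (gid X))) kX)
  (hkY : is_image (Phi (Some (gid Y))) kY)
  (hkW : is_image (Phi (Some (gid W))) kW)
  (Gphi : Hm C GX GY) (hGphi : cmp Gphi kY = cmp kX (Phi (Some (mkmor hf))))
  (idW : Ucar GW) (hidW : Umap kW idW = iotaA m0 (Phi (Some (gid W))))
  (h : Hm C GW GY) :
  (exists x : Ucar GX, Umap Gphi x = Umap h idW) ->
  exists ht : Hm C GW GX, cmp ht Gphi = h.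
Proof.
move=> [x hx].
case: hC => hR _ _ [Ucmp _].
have [uW [kuW ukW]] := image_idem_split hR (Phi_gid_idem hB1 W) hkW.
have [uX [_ ukX]] := image_idem_split hR (Phi_gid_idem hB1 X) hkX.
have [a ha] : exists a, cmp a (Phi (Some (mkmor hf))) = cmp uW (cmp h kY).
  apply: (B2_factor hB2 _ _ (Umap kX x)).
  rewrite /iotaA -ukW in hidW.
  by rewrite (Umap_split hR Ucmp _ kuW hidW) Ucmp -hx -!Ucmp hGphi.
exists (cmp kW (cmp a uX)); apply: (image_mono hR hkY).
rewrite -!(cmpA hR) hGphi (cmpA hR uX) ukX (Phi_gidl hB1) ha.
by rewrite (cmpA hR kW) kuW (cmp1l hR).
Qed.
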